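(* Let $f$ and $g_n$ ($n\in\mathbb{Z}^+$) be non-constant entire functions. If $\lim_{n\to\infty}(g_n\circ\cdots\circ g_1\circ f)=F$ uniformly on compact subsets of $\mathbb{C}$, then $$\bigcup_{n=0}^{\infty}{\rm Aut}(g_n\circ\cdots\circ g_1\circ f)\subseteq{\rm Aut}(F),$$ where the term with $n=0$ is ${\rm Aut}(f)$.
   Context: For a function $h$, ${\rm Aut}(h)$ is the set of automorphic functions of $h$: (generally multivalued) analytic functions $\phi$, or branches of such on domains, with $h(\phi(z))=h(z)$ on the domain of definition of $\phi$. If $F$ is constant, ${\rm Aut}(F)$ is by convention the set of all functions. *)

From Stdlib Require Import Reals List.
From Coquelicot Require Import Coquelicot.
Open Scope R_scope.

Definition C_differentiable (f : C -> C) (z : C) : Prop :=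
  @ex_derive C_AbsRing C_NormedModule f z.

Definition entire (f : C -> C) : Prop := forall z, C_differentiable f z.

Definition nonconstant (f : C -> C) : Prop := exists z w : C, f z <> f w.

Definition compact_set (K : C -> Prop) : Prop :=
  forall (I : Type) (U : I -> C -> Prop),
    (forall i, @open C_UniformSpace (U i)) ->
    (forall z, K z -> exists i, U i z) ->
    exists l : list I, forall z, K z -> exists i, In i l /\ U i z.

Definition cvg_locally_uniformly (G : nat -> C -> C) (F : C -> C) : Prop :=
  forall K, compact_set K ->
  forall eps : R, 0 < eps ->
  exists N : nat, forall n, (N <= n)%nat -> forall z, K z -> Cmod (G n z - F z) < eps.

Definition domain (D : C -> Prop) : Prop :=
  (exists z, D z) /\ @open C_UniformSpace D /\
  forall U V : C -> Prop, @open C_UniformSpace U -> @open C_UniformSpace V ->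
    (forall z, D z -> U z \/ V z) ->
    (forall z, D z -> U z -> V z -> False) ->
    (exists z, D z /\ U z) -> (exists z, D z /\ V z) -> False.

Definition analytic_on (D : C -> Prop) (phi : C -> C) : Prop :=
  forall z, D z -> C_differentiable phi z.

(* (D, phi) ∈ Aut(h): phi is an analytic function (branch) on the domain D with
   h (phi z) = h z on D; if h is constant, Aut(h) contains everything. *)
Definition in_Aut (h : C -> C) (D : C -> Prop) (phi : C -> C) : Prop :=
  ~ nonconstant h \/
  (domain D /\ analytic_on D phi /\ forall z, D z -> h (phi z) = h z).

(* iterated composition: comp_seq f g 0 = f,
   comp_seq f g (S n) = g (S n) ∘ comp_seq f g n = g_{n+1} ∘ ... ∘ g_1 ∘ f *)
Fixpoint comp_seq (f : C -> C) (g : nat -> C -> C) (n : nat) : C -> C :=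
  match n with
  | O => f
  | S m => fun z => g (S m) (comp_seq f g m z)
  end.

(* If [g_n o ... o g_1 o f] identifies two points [a] and [b], so does every later composite,
   hence so does the pointwise limit [F]. Thus an automorphic function of a composite is
   automorphic for [F], and a constant composite forces [F] to be constant. *)
From Stdlib Require Import Reals List Classical.
From Coquelicot Require Import Coquelicot.

Lemma comp_seq_eq_le (f : C -> C) (g : nat -> C -> C) (n m : nat) (a b : C) :
  (n <= m)%nat -> comp_seq f g n a = comp_seq f g n b ->
  comp_seq f g m a = comp_seq f g m b.
Proof.
  induction 1 as [|m _ IH]; intros Hab; [exact Hab|].
  simpl. rewrite (IH Hab). reflexivity.
Qed.

Lemma compact_set1 (a : C) : compact_set (fun z => z = a).
Proof.
  intros I U _ Hcover. destruct (Hcover a eq_refl) as [i Hi].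
  exists (i :: nil). intros z ->. exists i. split; [left|]; auto.
Qed.

Lemma cvg_locally_uniformly_pointwise (G : nat -> C -> C) (F : C -> C) (z : C) :
  cvg_locally_uniformly G F ->
  filterlim (fun n => G n z) eventually (locally (F z)).
Proof.
  intros Hcvg. apply filterlim_locally. intros eps.
  destruct (Hcvg _ (compact_set1 z) eps (cond_pos eps)) as [N HN].
  exists N. intros n Hn. apply (@norm_compat1 C_AbsRing C_NormedModule).
  change (Cmod (G n z - F z) < eps). exact (HN n Hn z eq_refl).
Qed.

Lemma cvg_locally_uniformly_eq (G : nat -> C -> C) (F : C -> C) (a b : C) :
  cvg_locally_uniformly G F -> eventually (fun n => G n a = G n b) -> F a = F b.
Proof.
  intros Hcvg Hab.
  apply (@filterlim_locally_unique nat C_AbsRing C_NormedModule eventually _ (fun n => G n b)).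
  - exact (filterlim_ext_loc _ _ Hab (cvg_locally_uniformly_pointwise G F a Hcvg)).
  - exact (cvg_locally_uniformly_pointwise G F b Hcvg).
Qed.

Lemma comp_seq_limit_eq (f : C -> C) (g : nat -> C -> C) (F : C -> C) (n : nat) (a b : C) :
  cvg_locally_uniformly (comp_seq f g) F ->
  comp_seq f g n a = comp_seq f g n b -> F a = F b.
Proof.
  intros Hcvg Hab. apply (cvg_locally_uniformly_eq _ _ _ _ Hcvg).
  exists n. intros m Hm. exact (comp_seq_eq_le f g n m a b Hm Hab).
Qed.

Lemma not_nonconstant (h : C -> C) : ~ nonconstant h -> forall z w, h z = h w.
Proof.
  intros Hconst z w. apply NNPP. intros Hzw. apply Hconst. exists z, w. exact Hzw.
Qed.

Theorem proposition8 (f : C -> C) (g : nat -> C -> C) (F : C -> C) :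
  entire f -> nonconstant f ->
  (forall n, (1 <= n)%nat -> entire (g n) /\ nonconstant (g n)) ->
  cvg_locally_uniformly (comp_seq f g) F ->
  forall (n : nat) (D : C -> Prop) (phi : C -> C),
    in_Aut (comp_seq f g n) D phi -> in_Aut F D phi.
Proof.
  intros _ _ _ Hcvg n D phi [Hconst | [HD [Hphi Hinv]]].
  - left. intros [z [w Hzw]]. apply Hzw.
    exact (comp_seq_limit_eq f g F n z w Hcvg (not_nonconstant _ Hconst z w)).
  - right. split; [exact HD | split; [exact Hphi|]].
    intros z Hz. exact (comp_seq_limit_eq f g F n _ _ Hcvg (Hinv z Hz)).
Qed.
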